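(* There exists a setting (with pairwise distinct budgets) such that, in the game under the BCP mechanism in which every player's budget-bid is fixed to his true budget ($g_i=B_i$) and each player's strategy is only his value-bid $b_i\ge0$, there is no pure Nash equilibrium (i.e. for every profile of value-bids some player can strictly increase his utility by changing only his own value-bid).
   Context: Setting: there are $k\ge 1$ slots with public click-through rates $\theta_1>\theta_2>\dots>\theta_k>0$, and $n\ge k$ players. Player $i$ has a private value per click $v_i\ge 0$ and a budget $B_i>0$; the budgets $B_1,\dots,B_n$ are pairwise distinct. A setting consists of $k,n,(\theta_j),(v_i),(B_i)$ together with a fixed strict priority order on the players used to break all ties. Each player $i$ submits a value-bid $b_i\ge 0$ and a budget-bid $g_i\ge 0$; a mechanism outputs an injective partial slot assignment (assigned player $i$ gets slot $s(i)\in\{1,\dots,k\}$) and a price per click $p(i)\ge0$ for each assigned player; unassigned players pay nothing. The utility of player $i$ is $u_i=0$ if $i$ is unassigned, $u_i=\theta_{s(i)}(v_i-p(i))$ if $i$ is assigned and $\theta_{s(i)}p(i)\le B_i$, and $u_i=-\infty$ if $i$ is assigned and $\theta_{s(i)}p(i)>B_i$. BCP: order the players by decreasing value-bid (ties broken by the priority order); each player's tentative price per click is the value-bid of the player immediately after him in this order (0 for the last player). Then process the players in this order; each player $i$ is assigned the highest-CTR slot $s$ not yet assigned such that $\theta_s\cdot(\text{his price})\le g_i$, and pays that price per click; if no unassigned slot satisfies this, he is left unassigned and pays nothing. *)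

From Stdlib Require Import Reals List Arith Bool.
Import ListNotations.
Open Scope R_scope.

(* Players are 0..n-1, slots are 0..k-1 (slot j has CTR theta j; the paper's
   slot j+1).  A utility of -infinity is represented by [None]. *)

Definition ext := option R.

Definition ext_lt (x y : ext) : Prop :=
  match x, y with
  | None, Some _ => True
  | Some a, Some c => a < c
  | _, None => False
  end.

Definition beforeb (b : nat -> R) (prio : nat -> nat) (i j : nat) : bool :=
  if Rlt_dec (b j) (b i) then true
  else if Req_EM_T (b i) (b j) then Nat.ltb (prio i) (prio j) else false.

Fixpoint insert_ord (b : nat -> R) (prio : nat -> nat) (x : nat) (l : list nat)
  : list nat :=
  match l with
  | [] => [x]
  | y :: l' => if beforeb b prio x y then x :: y :: l'
               else y :: insert_ord b prio x l'
  end.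

Definition bcp_order (n : nat) (b : nat -> R) (prio : nat -> nat) : list nat :=
  fold_right (insert_ord b prio) [] (seq 0 n).

(* highest-CTR (= smallest index, theta being decreasing) unassigned slot s
   with theta s * p <= g *)
Definition find_slot (k : nat) (theta : nat -> R) (taken : list nat) (p g : R)
  : option nat :=
  find (fun s => negb (existsb (Nat.eqb s) taken) &&
                 (if Rle_dec (theta s * p) g then true else false))
       (seq 0 k).

Fixpoint bcp_process (k : nat) (theta : nat -> R) (b g : nat -> R)
  (o : list nat) (taken : list nat) : list (nat * option (nat * R)) :=
  match o with
  | [] => []
  | i :: rest =>
      let p := match rest with j :: _ => b j | [] => 0 end in
      match find_slot k theta taken p (g i) with
      | Some s => (i, Some (s, p)) :: bcp_process k theta b g rest (s :: taken)
      | None => (i, None) :: bcp_process k theta b g rest taken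
      end
  end.

Fixpoint lookup (i : nat) (l : list (nat * option (nat * R))) : option (nat * R) :=
  match l with
  | [] => None
  | (j, r) :: l' => if Nat.eqb i j then r else lookup i l'
  end.

Definition bcp_outcome (k n : nat) (theta : nat -> R) (prio : nat -> nat)
  (b g : nat -> R) (i : nat) : option (nat * R) :=
  lookup i (bcp_process k theta b g (bcp_order n b prio) []).

Definition utility (k n : nat) (theta v B : nat -> R) (prio : nat -> nat)
  (b g : nat -> R) (i : nat) : ext :=
  match bcp_outcome k n theta prio b g i with
  | None => Some 0
  | Some (s, p) =>
      if Rle_dec (theta s * p) (B i) then Some (theta s * (v i - p)) else None
  end.

Definition upd (b : nat -> R) (i : nat) (x : R) : nat -> R :=
  fun j => if Nat.eqb j i then x else b j.

Definition valid_setting (k n : nat) (theta v B : nat -> R) (prio : nat -> nat)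
  : Prop :=
  (1 <= k)%nat /\ (k <= n)%nat /\
  (forall j, (j + 1 < k)%nat -> theta (j + 1)%nat < theta j) /\
  0 < theta (k - 1)%nat /\
  (forall i, (i < n)%nat -> 0 <= v i) /\
  (forall i, (i < n)%nat -> 0 < B i) /\
  (forall i j, (i < n)%nat -> (j < n)%nat -> i <> j -> B i <> B j) /\
  (forall i j, (i < n)%nat -> (j < n)%nat -> prio i = prio j -> i = j).

From Stdlib Require Import Reals List Arith Lra Lia.
Open Scope R_scope.

(* Two slots with click-through rates 4 and 2, three players
     player 0: value 4, budget 2   (can afford slot 0 iff price <= 1/2,
                                    slot 1 iff price <= 1)
     player 1: value 6, budget 4   (slot 0 iff price <= 1, slot 1 iff price <= 2)
     player 2: value 2, budget 1   (slot 0 iff price <= 1/4, slot 1 iff price <= 1/2)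
   with priority order 0, 1, 2.  Every price a player can afford is below his
   value, so the budget constraint never bites and winning a slot is always
   profitable.

   For a bid profile, the BCP ranking (bids decreasing, ties by priority) is one
   of the six permutations of the players; [bcp_rank_cases] splits the bid space
   accordingly.  For each ranking, a lemma [ranked_xyz] exhibits, after at most two
   further threshold comparisons, one player and one explicit value-bid that
   strictly improves his utility. *)

Definition ctr (j : nat) : R := match j with 0%nat => 4 | _ => 2 end.
Definition value (i : nat) : R := match i with 0%nat => 4 | 1%nat => 6 | _ => 2 end.
Definition budget (i : nat) : R := match i with 0%nat => 2 | 1%nat => 4 | _ => 1 end.
Definition priority (i : nat) : nat := i.

Lemma example_setting_valid : valid_setting 2 3 ctr value budget priority.
Proof.
  repeat split; try lia.
  - intros j Hj. destruct j as [|j]; [simpl; lra | lia].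
  - simpl; lra.
  - intros i Hi. destruct i as [|[|[|i]]]; simpl; try lra; lia.
  - intros i Hi. destruct i as [|[|[|i]]]; simpl; try lra; lia.
  - intros i j Hi Hj Hij.
    destruct i as [|[|[|i]]]; destruct j as [|[|[|j]]]; simpl; try lra; lia.
  - intros i j _ _ H. exact H.
Qed.

Definition improves (b : nat -> R) (i : nat) (x : R) : Prop :=
  ext_lt (utility 2 3 ctr value budget priority b budget i)
         (utility 2 3 ctr value budget priority (upd b i x) budget i).

Definition can_improve (b : nat -> R) : Prop :=
  exists (i : nat) (x : R), (i < 3)%nat /\ 0 <= x /\ improves b i x.

Ltac unfold_bcp :=
  cbv beta iota zeta delta [improves utility bcp_outcome bcp_order find_slot
    beforeb upd ctr value budget priority bcp_process insert_ord lookup fold_right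
    seq find existsb negb andb orb Nat.eqb Nat.ltb Nat.leb ext_lt].

Ltac evaluate_bcp :=
  unfold_bcp;
  repeat (match goal with
   | |- context [Rlt_dec ?a ?b] => destruct (Rlt_dec a b)
   | |- context [Req_EM_T ?a ?b] => destruct (Req_EM_T a b)
   | |- context [Rle_dec ?a ?b] => destruct (Rle_dec a b)
   end; unfold_bcp; try (exfalso; lra)); lra.

Ltac deviate i x :=
  exists i, x; split; [lia | split; [lra | evaluate_bcp]].

(* The six possible BCP rankings; disjunct "xyz" means x is ranked first, y
   second and z last for bids b0 = a, b1 = c, b2 = d (ties go to the lower index). *)
Lemma bcp_rank_cases (a c d : R) :
  (c <= a /\ d <= c) \/ (d <= a /\ c < d) \/ (a < c /\ d <= a) \/
  (a < d /\ d <= c) \/ (a < d /\ c <= a) \/ (c < d /\ a < c).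
Proof.
  destruct (Rle_or_lt c a), (Rle_or_lt d c), (Rle_or_lt d a);
    repeat match goal with
           | |- _ \/ _ => first [left; split; lra | right]
           | |- _ /\ _ => split; lra
           end.
Qed.

Section Ranked.
Variable b : nat -> R.
Hypothesis b0_ge0 : 0 <= b 0%nat.
Hypothesis b1_ge0 : 0 <= b 1%nat.
Hypothesis b2_ge0 : 0 <= b 2%nat.

(* Ranking 0,1,2.  If b1 <= 1/2, player 1 holds slot 1 and bids 1 to obtain slot 0
   (player 0 can no longer afford it, or is overtaken).  Otherwise player 0 cannot
   afford slot 0 at price b1 > 1/2; bidding (b2 + 1/2)/2 he gets slot 1 cheaper,
   or gets a slot at all. *)
Lemma ranked_012 : b 1%nat <= b 0%nat -> b 2%nat <= b 1%nat -> can_improve b.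
Proof.
  intros H01 H12.
  destruct (Rle_or_lt (b 1%nat) (1/2)).
  - deviate 1%nat 1.
  - deviate 0%nat ((b 2%nat + 1/2)/2).
Qed.

(* Ranking 0,2,1.  Both slots go to players 0 and 2 when b2 <= 1/2; then the
   unassigned player 1 buys a slot by bidding 1/2.  Otherwise player 0 pays
   b2 > 1/2, so holds at best slot 1; bidding 1/2 he gets a slot at a lower price
   (possibly slot 0). *)
Lemma ranked_021 : b 2%nat <= b 0%nat -> b 1%nat < b 2%nat -> can_improve b.
Proof.
  intros H02 H21.
  destruct (Rle_or_lt (b 2%nat) (1/2)).
  - deviate 1%nat (1/2).
  - deviate 0%nat (1/2).
Qed.

(* Ranking 1,0,2.  If b0 <= 1/2, players 1 and 0 fill both slots and player 2 gets
   slot 1 by overtaking player 0.  Otherwise player 1 pays b0 > 1/2 and gets a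
   cheaper or better slot by dropping below player 0 (to a bid in (1/2, b0), or to
   1/2 if b0 > 1). *)
Lemma ranked_102 : b 0%nat < b 1%nat -> b 2%nat <= b 0%nat -> can_improve b.
Proof.
  intros H10 H02.
  destruct (Rle_or_lt (b 0%nat) (1/2)).
  - destruct (Rlt_or_le (b 1%nat) 1).
    + deviate 2%nat ((b 0%nat + b 1%nat)/2).
    + deviate 2%nat 1.
  - destruct (Rle_or_lt (b 0%nat) 1).
    + deviate 1%nat ((b 0%nat + 1/2)/2).
    + deviate 1%nat (1/2).
Qed.

(* Ranking 1,2,0.  If b2 <= 1/2, players 1 and 2 fill both slots and player 0 buys
   one by bidding 1/2.  Otherwise player 1 pays b2 > 1/2; dropping below player 2
   (to a bid between b0 and b2, or to b0 itself) he pays at most b0 and obtains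
   slot 0. *)
Lemma ranked_120 : b 0%nat < b 2%nat -> b 2%nat <= b 1%nat -> can_improve b.
Proof.
  intros H20 H12.
  destruct (Rle_or_lt (b 2%nat) (1/2)).
  - deviate 0%nat (1/2).
  - destruct (Rle_or_lt (b 0%nat) (1/2)).
    + deviate 1%nat ((b 0%nat + b 2%nat)/2).
    + deviate 1%nat (b 0%nat).
Qed.

(* Ranking 2,0,1.  If b1 <= 1/2, player 1 bids 1 and secures slot 0.  Otherwise
   player 0, who pays b1 > 1/2 for slot 1 (or gets nothing), bids 0 and takes
   slot 1 at price 0. *)
Lemma ranked_201 : b 0%nat < b 2%nat -> b 1%nat <= b 0%nat -> can_improve b.
Proof.
  intros H20 H01.
  destruct (Rle_or_lt (b 1%nat) (1/2)).
  - deviate 1%nat 1.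
  - deviate 0%nat 0.
Qed.

(* Ranking 2,1,0.  If b0 <= 1/2, player 0 is left out: he buys a slot by bidding
   1/2 when b1 <= 1/2, and otherwise player 2, who cannot afford anything at
   price b1 > 1/2, moves below player 1 and gets slot 1.  If b0 > 1/2, player 1
   ties player 0's bid: ranked last, he pays 0 and obtains slot 0, which neither
   other player can afford at a price above 1/2. *)
Lemma ranked_210 : b 1%nat < b 2%nat -> b 0%nat < b 1%nat -> can_improve b.
Proof.
  intros H21 H10.
  destruct (Rle_or_lt (b 0%nat) (1/2)).
  - destruct (Rle_or_lt (b 1%nat) (1/2)).
    + deviate 0%nat (1/2).
    + destruct (Rlt_or_le (b 1%nat) 1).
      * deviate 2%nat ((b 0%nat + b 1%nat)/2).
      * deviate 2%nat 1.
  - deviate 1%nat (b 0%nat).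
Qed.

End Ranked.

Theorem lemma1 :
  exists (k n : nat) (theta v B : nat -> R) (prio : nat -> nat),
    valid_setting k n theta v B prio /\
    forall b : nat -> R,
      (forall i, (i < n)%nat -> 0 <= b i) ->
      exists (i : nat) (b' : R),
        (i < n)%nat /\ 0 <= b' /\
        ext_lt (utility k n theta v B prio b B i)
               (utility k n theta v B prio (upd b i b') B i).
Proof.
  exists 2%nat, 3%nat, ctr, value, budget, priority.
  split; [exact example_setting_valid |].
  intros b Hb.
  pose proof (Hb 0%nat ltac:(lia)) as b0_ge0.
  pose proof (Hb 1%nat ltac:(lia)) as b1_ge0.
  pose proof (Hb 2%nat ltac:(lia)) as b2_ge0.
  change (can_improve b).
  destruct (bcp_rank_cases (b 0%nat) (b 1%nat) (b 2%nat))
    as [[] | [[] | [[] | [[] | [[] | []]]]]].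
  - apply ranked_012; assumption.
  - apply ranked_021; assumption.
  - apply ranked_102; assumption.
  - apply ranked_120; assumption.
  - apply ranked_201; assumption.
  - apply ranked_210; assumption.
Qed.
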